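(* There is an absolute constant $c>0$ such that for every $\alpha\in(0,1/2]$ there exist a distribution $\mathcal D$ over $\mathcal X\times\{A,B\}\times\{0,1\}$, a hypothesis class $\mathcal H$ with an optimal Equalized-Odds-constrained classifier $h^*\in\mathcal H$ on $\mathcal D$, and a distribution $\mathcal Q$ such that, with $\widetilde{\mathcal D}=(1-\alpha)\mathcal D+\alpha\mathcal Q$, every (possibly randomized) hypothesis $h$ that satisfies Equalized Odds on $\widetilde{\mathcal D}$ satisfies $\Pr_{\mathcal D}[h(x,z)\ne y]\ge\Pr_{\mathcal D}[h^*(x,z)\ne y]+c$. In words: for a learner maximizing accuracy subject to Equalized Odds, an adversary with corruption fraction $\alpha$ can force an additional $\Omega(1)$ accuracy loss compared with the optimal fair classifier on the true distribution.
   Context: Examples are triples (features $x$, group $z\in\{A,B\}$, label $y\in\{0,1\}$); hypotheses may depend on the group. A hypothesis $h$ satisfies Equalized Odds on a distribution if $\Pr[h=1\mid y=1,z=A]=\Pr[h=1\mid y=1,z=B]$ and $\Pr[h=1\mid y=0,z=A]=\Pr[h=1\mid y=0,z=B]$. $h^*$ minimizes $\Pr_{\mathcal D}[h\ne y]$ over $h\in\mathcal H$ satisfying Equalized Odds on $\mathcal D$. *)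

From mathcomp Require Import all_boot all_order all_algebra.
From mathcomp Require Import reals.
Set Implicit Arguments. Unset Strict Implicit. Unset Printing Implicit Defensive.
Import Order.TTheory GRing.Theory Num.Theory.
Local Open Scope ring_scope.

(* Groups are encoded as bool: group A = true, group B = false.
   Labels y are bool: 1 = true, 0 = false. *)
Definition grpA : bool := true.
Definition grpB : bool := false.

Section Fair.
Variables (R : realType) (X : finType).

Definition is_dist (D : X -> bool -> bool -> R) : Prop :=
  (forall x z y, 0 <= D x z y) /\ \sum_(x : X) \sum_(z : bool) \sum_(y : bool) D x z y = 1.

(* A (possibly randomized) hypothesis: h x z = Pr[h(x,z) = 1]. *)
Definition is_randomized (h : X -> bool -> R) : Prop :=
  forall x z, 0 <= h x z <= 1.

Definition cell_mass (D : X -> bool -> bool -> R) (zv yv : bool) : R :=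
  \sum_(x : X) D x zv yv.

Definition cond_pos (D : X -> bool -> bool -> R) (h : X -> bool -> R) (zv yv : bool) : R :=
  (\sum_(x : X) D x zv yv * h x zv) / cell_mass D zv yv.

Definition equalized_odds (D : X -> bool -> bool -> R) (h : X -> bool -> R) : Prop :=
  cond_pos D h grpA true = cond_pos D h grpB true /\
  cond_pos D h grpA false = cond_pos D h grpB false.

Definition err (D : X -> bool -> bool -> R) (h : X -> bool -> R) : R :=
  \sum_(x : X) \sum_(z : bool)
     (D x z true * (1 - h x z) + D x z false * h x z).

Definition mixture (alpha : R) (D Q : X -> bool -> bool -> R) : X -> bool -> bool -> R :=
  fun x z y => (1 - alpha) * D x z y + alpha * Q x z y.

Definition optimal_EO (D : X -> bool -> bool -> R) (H : (X -> bool -> R) -> Prop)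
  (hstar : X -> bool -> R) : Prop :=
  H hstar /\ equalized_odds D hstar /\
  forall h, H h -> equalized_odds D h -> err D hstar <= err D h.

End Fair.

(* Take features x = y on the clean distribution, so that reading the label
   off x is an error-free Equalized-Odds classifier.  Group B has such small
   mass that the adversary can add, with its alpha budget, the flipped pairs
   x <> y in group B in exactly the amounts already present; in the corrupted
   distribution group B's features then carry no information about y, so any
   classifier has equal true and false positive rates on B.  Equalized Odds
   transfers this to group A, where x = y still holds, forcing h(1, A) =
   h(0, A); such an h errs on group A with probability equal to the mass of
   one of its labels, which is at least 1/4. *)

From mathcomp Require Import all_boot all_order all_algebra.
From mathcomp Require Import reals.
From mathcomp Require Import ring lra.
Set Implicit Arguments. Unset Strict Implicit. Unset Printing Implicit Defensive.
Import Order.TTheory GRing.Theory Num.Theory.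
Local Open Scope ring_scope.

Section EqualizedOddsFacts.
Variables (R : realType) (X : finType).
Implicit Types (D M : X -> bool -> bool -> R) (h : X -> bool -> R).

Definition group_err D h (z : bool) : R :=
  \sum_(x : X) (D x z true * (1 - h x z) + D x z false * h x z).

Lemma err_group_split D h : err D h = group_err D h grpA + group_err D h grpB.
Proof. by rewrite /err /group_err exchange_big big_bool. Qed.

Lemma group_err_ge0 D h z :
  (forall x z y, 0 <= D x z y) -> is_randomized h -> 0 <= group_err D h z.
Proof.
move=> D_ge0 h_rand; apply: sumr_ge0 => x _.
have /andP[h_ge0 h_le1] := h_rand x z.
by apply: addr_ge0; apply: mulr_ge0; rewrite ?subr_ge0.
Qed.

Lemma cond_pos_label_indep M h z :
  (forall x, M x z true = M x z false) -> cond_pos M h z true = cond_pos M h z false.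
Proof.
move=> M_indep; rewrite /cond_pos /cell_mass.
by congr (_ / _); apply: eq_bigr => x _; rewrite M_indep.
Qed.

Lemma cond_pos_point_mass M h z y x0 :
  (forall x, x != x0 -> M x z y = 0) -> M x0 z y != 0 -> cond_pos M h z y = h x0 z.
Proof.
move=> M_off M_x0; rewrite /cond_pos /cell_mass.
rewrite (bigD1 x0) //= [in X in _ / X](bigD1 x0) //=.
rewrite !big1 ?addr0 => [|x /M_off ->|x /M_off ->] //; last by rewrite mul0r.
by rewrite [M x0 z y * _]mulrC mulfK.
Qed.

Lemma equalized_odds_label_blind M h :
  (forall x, M x grpB true = M x grpB false) -> equalized_odds M h ->
  cond_pos M h grpA true = cond_pos M h grpA false.
Proof.
by move=> /(cond_pos_label_indep h) blindB [-> ->].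
Qed.

End EqualizedOddsFacts.

Section Construction.
Variables (R : realType) (alpha : R).
Hypotheses (alpha_gt0 : 0 < alpha) (alpha_le_half : alpha <= 2^-1).

(* Chosen so that (1 - alpha) * minority_mass = alpha / 4, the adversary's
   mass on each cell of group B. *)
Definition minority_mass : R := alpha / (4 * (1 - alpha)).

Definition clean_dist : bool -> bool -> bool -> R :=
  fun x z y => if x == y then (if z then 2^-1 - minority_mass else minority_mass) else 0.

Definition poison_dist : bool -> bool -> bool -> R :=
  fun x z y => if (x == y) == z then 4^-1 else 0.

Definition label_reader : bool -> bool -> R := fun x _ => if x then 1 else 0.

Definition corrupted : bool -> bool -> bool -> R :=
  mixture alpha clean_dist poison_dist.

Lemma minority_mass_gt0 : 0 < minority_mass.
Proof. by apply: divr_gt0 => //; have := alpha_le_half; lra. Qed.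

Lemma minority_mass_le_quarter : minority_mass <= 4^-1.
Proof. by rewrite ler_pdivrMr; have := alpha_le_half; lra. Qed.

Lemma scaled_minority_mass : (1 - alpha) * minority_mass = alpha / 4.
Proof. by rewrite /minority_mass; field; have := alpha_le_half; lra. Qed.

Lemma clean_dist_is_dist : is_dist clean_dist.
Proof.
have := minority_mass_le_quarter; have := minority_mass_gt0.
split; first by move=> [] [] []; rewrite /clean_dist /=; lra.
by rewrite !big_bool /clean_dist /=; lra.
Qed.

Lemma clean_cell_mass_gt0 z y : 0 < cell_mass clean_dist z y.
Proof.
have := minority_mass_le_quarter; have := minority_mass_gt0.
by case: z; case: y; rewrite /cell_mass !big_bool /clean_dist /=; lra.
Qed.

Lemma poison_dist_is_dist : is_dist poison_dist.
Proof.
split; first by move=> [] [] []; rewrite /poison_dist /=; lra.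
by rewrite !big_bool /poison_dist /=; lra.
Qed.

Lemma corrupted_label_blind x : corrupted x grpB true = corrupted x grpB false.
Proof.
by case: x; rewrite /corrupted /mixture /clean_dist /poison_dist /=
  ?scaled_minority_mass; lra.
Qed.

Lemma cond_pos_corrupted_grpA h y : cond_pos corrupted h grpA y = h y grpA.
Proof.
have := minority_mass_le_quarter; have := alpha_gt0; have := alpha_le_half.
rewrite /corrupted /mixture /clean_dist /poison_dist /grpA => le_half a_gt0 m_le.
apply: cond_pos_point_mass => [x /negbTE -> /=|]; first lra.
by rewrite eqxx /=; apply/lt0r_neq0; nra.
Qed.

Lemma label_reader_err : err clean_dist label_reader = 0.
Proof. by rewrite /err !big_bool /clean_dist /label_reader /=; lra. Qed.

Lemma label_reader_optimal_EO :
  optimal_EO clean_dist (fun h => h = label_reader) label_reader.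
Proof.
have := minority_mass_le_quarter; have := minority_mass_gt0 => m_gt0 m_le.
split=> //; split; last by move=> h -> _.
have cp z y : cond_pos clean_dist label_reader z y = label_reader y z.
  apply: cond_pos_point_mass => [x /negbTE|]; rewrite /clean_dist.
    by rewrite eq_sym => ->.
  by rewrite eqxx; case: z; apply/lt0r_neq0; lra.
by split; rewrite !cp.
Qed.

Lemma group_err_clean_grpA h :
  h true grpA = h false grpA -> group_err clean_dist h grpA = 2^-1 - minority_mass.
Proof.
by move=> h_flat; rewrite /group_err big_bool /clean_dist /= h_flat; lra.
Qed.

End Construction.

Theorem mainTheorem9 (R : realType) :
  exists c : R, 0 < c /\
  forall alpha : R, 0 < alpha -> alpha <= 2^-1 ->
  exists (X : finType) (D : X -> bool -> bool -> R)
         (H : (X -> bool -> R) -> Prop) (hstar : X -> bool -> R)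
         (Q : X -> bool -> bool -> R),
    is_dist D /\ (forall z y, 0 < cell_mass D z y) /\
    (forall h, H h -> is_randomized h) /\
    optimal_EO D H hstar /\ is_dist Q /\
    forall h : X -> bool -> R, is_randomized h ->
      equalized_odds (mixture alpha D Q) h ->
      err D hstar + c <= err D h.
Proof.
exists 4^-1; split; first lra.
move=> alpha alpha_gt0 alpha_le_half.
exists bool, (clean_dist alpha), (fun h => h = label_reader R), (label_reader R),
  (poison_dist R).
have clean := clean_dist_is_dist alpha_gt0 alpha_le_half.
split=> //; split; first exact: clean_cell_mass_gt0.
split; first by move=> _ -> x z; case: x; rewrite /label_reader; lra.
split; first exact: label_reader_optimal_EO.
split; first exact: poison_dist_is_dist.
move=> h h_rand h_EO.
have h_flat : h true grpA = h false grpA.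
  rewrite -[LHS](cond_pos_corrupted_grpA alpha_gt0 alpha_le_half).
  rewrite -[RHS](cond_pos_corrupted_grpA alpha_gt0 alpha_le_half).
  exact: equalized_odds_label_blind (corrupted_label_blind alpha_le_half) h_EO.
have := group_err_ge0 grpB clean.1 h_rand.
have := minority_mass_le_quarter alpha_le_half.
rewrite label_reader_err err_group_split group_err_clean_grpA //; lra.
Qed.
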